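(* Let $G$ be a $B_2$-EPG graph given with a representation in which every vertex is a Z-vertex, and let $X$ be a clique of $G$. For rows $a,b$ let $X_{ab}$ be the set of vertices of $X$ with index exactly $\{a,b\}$. If there are two rows $a,b$ such that the projection graph of $X_{ab}$ on $a$ is not a clique, then $X$ is contained in (the vertex set of) a good graph of $G$.
   Context: A graph $G$ is a $B_k$-EPG graph if each vertex $u$ can be assigned a path $P_u$ in the planar orthogonal grid with at most $k$ bends such that $uv\in E(G)$ iff $P_u$ and $P_v$ share at least one grid edge (a representation); for $B_2$-EPG graphs one assumes w.l.o.g. every path has exactly two bends. A vertex $u$ intersects a row (column) if $P_u$ contains a grid edge of it; the index of $u$ is the set of rows it intersects. A Z-vertex intersects exactly two rows and one column. If $a$ is in the index of $u$, $P_u^a$ is the segment of row $a$ between the two points of row $a$ where $P_u$ stops or bends. Types: $\emptyset$, $\mathsf d$, $\mathsf u$. A typed interval on row $a$ is $[x\alpha, y\beta]$ with $\alpha\le\beta$ points of row $a$ and $x,y$ types; it is proper if $\alpha\neq\beta$, or $\alpha=\beta$, $x=y$ and $x\in\{\mathsf u,\mathsf d\}$. For typed intervals $t=[x\alpha,y\beta]$, $t'=[x'\alpha',y'\beta']$ on row $a$ and an endpoint $z\gamma\in\{x'\alpha',y'\beta'\}$ of $t'$, $t$ is coherent with $z\gamma$ if (i) $\gamma\in(\alpha,\beta)$ (open interval), or (ii) $z=\emptyset$ and $[\alpha,\beta]$ contains the grid edge of $[\alpha',\beta']$ incident to $\gamma$, or (iii) $z\neq\emptyset$ and $z\gamma\in\{x\alpha,y\beta\}$.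 $t$ contains $t'$ if $[\alpha',\beta']\subseteq[\alpha,\beta]$ and $t$ is coherent with both endpoints of $t'$. $t$ intersects $t'$ if $[\alpha,\beta]\cap[\alpha',\beta']$ contains a grid edge, or $t$ is coherent with an endpoint of $t'$, or $t'$ is coherent with an endpoint of $t$. The t-projection of $u$ on $a$ is $[x\alpha,y\beta]$ where $\alpha,\beta$ are the endpoints of $P_u^a$ and the type of an endpoint $\gamma$ is $\emptyset$ if $P_u$ ends at $\gamma$, $\mathsf d$ if $P_u$ bends downwards at $\gamma$, $\mathsf u$ if upwards. A vertex $u$ contains (intersects) a typed interval $t$ on $a$ if $a$ is in the index of $u$ and its t-projection on $a$ contains (intersects) $t$. The projection graph of a set $Y$ of vertices whose indices contain $a$ is the graph on $Y$ in which $u,v$ are adjacent iff their t-projections on $a$ intersect. A good graph of $G$ is an induced subgraph $H$ of one of the following forms: (I) there are two rows $a,b$ and proper typed intervals $t_a$ on $a$ and $t_b$ on $b$ such that $H$ is induced by all vertices $v$ that contain $t_a$, or contain $t_b$, or intersect both $t_a$ and $t_b$; (II) there are three rows $a,b,c$ and proper typed intervals $t_a,t_b,t_c$ on $a,b,c$ respectively such that $H$ is induced by all vertices $v$ that contain $t_a$, or contain $t_b$, or intersect $t_b$ and contain $t_c$. *)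

From Stdlib Require Import ZArith List.
Open Scope Z_scope.

(** * Grid and Z-shaped paths
    Grid points are (x, y) in Z * Z; row y = const, column x = const.
    y grows upwards, so "downwards" means towards smaller y. *)

(** A path with exactly two bends intersecting exactly two rows and one column
    (a Z-vertex) is horizontal-vertical-horizontal:
      (zx1, zr1) -- (zc, zr1) | (zc, zr2) -- (zx2, zr2). *)
Record zpath := ZPath { zr1 : Z; zr2 : Z; zc : Z; zx1 : Z; zx2 : Z }.

Definition is_zvertex (p : zpath) : Prop :=
  zr1 p <> zr2 p /\ zx1 p <> zc p /\ zx2 p <> zc p.

(** Grid edges: [HE y x] joins (x,y)-(x+1,y); [VE x y] joins (x,y)-(x,y+1). *)
Inductive gedge := HE (y x : Z) | VE (x y : Z).

Definition seg_has (lo hi k : Z) : Prop := Z.min lo hi <= k /\ k + 1 <= Z.max lo hi.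

Definition path_has_edge (p : zpath) (e : gedge) : Prop :=
  match e with
  | HE y x => (y = zr1 p /\ seg_has (zx1 p) (zc p) x) \/
              (y = zr2 p /\ seg_has (zx2 p) (zc p) x)
  | VE x y => x = zc p /\ seg_has (zr1 p) (zr2 p) y
  end.

Definition adj {V : Type} (P : V -> zpath) (u v : V) : Prop :=
  u <> v /\ exists e, path_has_edge (P u) e /\ path_has_edge (P v) e.

Definition is_clique {V : Type} (P : V -> zpath) (X : V -> Prop) : Prop :=
  forall u v, X u -> X v -> u <> v -> adj P u v.

Definition in_index (p : zpath) (a : Z) : Prop := a = zr1 p \/ a = zr2 p.

Definition X_ab {V : Type} (P : V -> zpath) (X : V -> Prop) (a b : Z) (v : V) : Prop :=
  X v /\ ((zr1 (P v) = a /\ zr2 (P v) = b) \/ (zr1 (P v) = b /\ zr2 (P v) = a)).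

Inductive ttype := TEmpty | TDown | TUp.

(** [TI x al y be] is the typed interval [x al, y be] (with al <= be). *)
Record tint := TI { tlt : ttype; tlp : Z; trt : ttype; trp : Z }.

Definition tint_wf (t : tint) : Prop := tlp t <= trp t.

Definition proper (t : tint) : Prop :=
  tint_wf t /\
  (tlp t <> trp t \/
   (tlp t = trp t /\ tlt t = trt t /\ (tlt t = TUp \/ tlt t = TDown))).

Definition coh_left (t t' : tint) : Prop :=
  (tlp t < tlp t' < trp t) \/
  (tlt t' = TEmpty /\ tlp t' < trp t' /\ tlp t <= tlp t' /\ tlp t' + 1 <= trp t) \/
  (tlt t' <> TEmpty /\ ((tlt t' = tlt t /\ tlp t' = tlp t) \/
                        (tlt t' = trt t /\ tlp t' = trp t))).

Definition coh_right (t t' : tint) : Prop :=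
  (tlp t < trp t' < trp t) \/
  (trt t' = TEmpty /\ tlp t' < trp t' /\ tlp t <= trp t' - 1 /\ trp t' <= trp t) \/
  (trt t' <> TEmpty /\ ((trt t' = tlt t /\ trp t' = tlp t) \/
                        (trt t' = trt t /\ trp t' = trp t))).

Definition tcontains (t t' : tint) : Prop :=
  tlp t <= tlp t' /\ trp t' <= trp t /\ coh_left t t' /\ coh_right t t'.

Definition tintersects (t t' : tint) : Prop :=
  Z.max (tlp t) (tlp t') + 1 <= Z.min (trp t) (trp t') \/
  coh_left t t' \/ coh_right t t' \/ coh_left t' t \/ coh_right t' t.

(** type at the bend point of row-segment on row [a] when the path continues
    to row [a'] *)
Definition bend_type (a a' : Z) : ttype := if Z.ltb a' a then TDown else TUp.

(** typed interval of the horizontal segment from the free end [x] to the bend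
    [c] on row [a], the path turning towards row [a'] at [c] *)
Definition seg_tint (x c a a' : Z) : tint :=
  if Z.leb x c then TI TEmpty x (bend_type a a') c
  else TI (bend_type a a') c TEmpty x.

(** t-projection of a path on row a (meaningful when a is in its index) *)
Definition tproj (p : zpath) (a : Z) : tint :=
  if Z.eqb a (zr1 p) then seg_tint (zx1 p) (zc p) (zr1 p) (zr2 p)
  else seg_tint (zx2 p) (zc p) (zr2 p) (zr1 p).

Definition v_contains (p : zpath) (a : Z) (t : tint) : Prop :=
  in_index p a /\ tcontains (tproj p a) t.

Definition v_intersects (p : zpath) (a : Z) (t : tint) : Prop :=
  in_index p a /\ tintersects (tproj p a) t.

Definition proj_graph_clique {V : Type} (P : V -> zpath) (Y : V -> Prop) (a : Z) : Prop :=
  forall u v, Y u -> Y v -> u <> v -> tintersects (tproj (P u) a) (tproj (P v) a).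

Definition good_I {V : Type} (P : V -> zpath) (a b : Z) (ta tb : tint) (v : V) : Prop :=
  v_contains (P v) a ta \/ v_contains (P v) b tb \/
  (v_intersects (P v) a ta /\ v_intersects (P v) b tb).

Definition good_II {V : Type} (P : V -> zpath) (a b c : Z) (ta tb tc : tint) (v : V) : Prop :=
  v_contains (P v) a ta \/ v_contains (P v) b tb \/
  (v_intersects (P v) b tb /\ v_contains (P v) c tc).

Definition in_good_graph {V : Type} (P : V -> zpath) (X : V -> Prop) : Prop :=
  (exists a b ta tb, proper ta /\ proper tb /\
     forall v, X v -> good_I P a b ta tb v) \/
  (exists a b c ta tb tc, proper ta /\ proper tb /\ proper tc /\
     forall v, X v -> good_II P a b c ta tb tc v).

From Stdlib Require Import ZArith List Lia Classical.
Open Scope Z_scope.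

(* Read a typed interval as the set of grid edges it covers together with its
   typed points (p, x), x in {u, d}: p is interior, or an endpoint of type x.
   For proper intervals, intersecting and containing become sharing an edge or
   a typed point and inclusion of these sets, and typed intervals then have
   the Helly property: pairwise intersecting t-projections on a row contain a
   common proper typed interval, which every vertex intersecting all of them
   intersects.

   Let p, q in X_ab have disjoint t-projections on a.  Every vertex of X uses
   row a or row b: otherwise it could share only vertical edges with p and q,
   so p and q would bend on the same column and meet there.  Two vertices of X
   using a but not b both meet the projections of p and q, which bend the same
   way, so they meet each other in the gap between these projections.  If the
   vertices using b but not a also pairwise intersect, the Helly intervals on
   a and b give a good graph of form (I).  Otherwise two of them share a third
   row c and form such a disjoint pair on (b, c); repeating the argument, either
   form (I) arises on {b, c}, or a disjoint pair on (c, d) appears, where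
   covering by {a, b} forces d = a, and the Helly intervals on a, b, c give a
   good graph of form (II). *)

Ltac destruct_hyps := repeat match goal with
  | H : _ /\ _ |- _ => destruct H
  | H : _ \/ _ |- _ => destruct H
  | H : exists _, _ |- _ => destruct H
  end.

Ltac crush := solve [ lia | congruence | split; crush | left; crush | right; crush ].

Ltac solve_tpoint :=
  split; [congruence|];
  first [ left; lia | right; left; split; [lia|congruence]
        | right; right; split; [lia|congruence] ].

(** * Typed intervals as sets of edges and typed points *)

Definition tedge (t : tint) (k : Z) : Prop := tlp t <= k /\ k + 1 <= trp t.

Definition tpoint (t : tint) (p : Z) (x : ttype) : Prop :=
  x <> TEmpty /\
  (tlp t < p < trp t \/ (p = tlp t /\ x = tlt t) \/ (p = trp t /\ x = trt t)).

Definition tmeet (t t' : tint) : Prop :=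
  (exists k, tedge t k /\ tedge t' k) \/ (exists p x, tpoint t p x /\ tpoint t' p x).

Definition tsub (t t' : tint) : Prop :=
  (forall k, tedge t k -> tedge t' k) /\ (forall p x, tpoint t p x -> tpoint t' p x).

Lemma tmeet_sym t t' : tmeet t t' -> tmeet t' t.
Proof. intros [[k [A B]]|[p [x [A B]]]]; [left|right]; eauto. Qed.

Lemma tsub_trans t1 t2 t3 : tsub t1 t2 -> tsub t2 t3 -> tsub t1 t3.
Proof. intros [E1 P1] [E2 P2]; split; auto. Qed.

Lemma tmeet_tintersects t t' : tmeet t t' -> tintersects t t'.
Proof.
  destruct t as [x al y be], t' as [x' al' y' be'].
  unfold tmeet, tedge, tpoint, tintersects, coh_left, coh_right; simpl.
  intros M; destruct_hyps; subst; crush.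
Qed.

Lemma tintersects_tmeet t t' :
  proper t -> proper t' -> tintersects t t' -> tmeet t t'.
Proof.
  destruct t as [x al y be], t' as [x' al' y' be'].
  unfold proper, tint_wf, tintersects, coh_left, coh_right, tmeet, tedge, tpoint; simpl.
  intros Pt Pt' I; destruct_hyps;
  solve [ congruence
        | left; exists (Z.max al al'); crush | left; exists (be - 1); crush
        | left; exists (be' - 1); crush
        | right; exists al, x; crush | right; exists be, y; crush
        | right; exists al', x'; crush | right; exists be', y'; crush ].
Qed.

Lemma tsub_tcontains t t' : tint_wf t' -> proper t -> tsub t t' -> tcontains t' t.
Proof.
  destruct t as [x al y be], t' as [x' al' y' be'].
  unfold proper, tint_wf, tsub, tcontains, coh_left, coh_right, tedge, tpoint; simpl.
  intros W [Wt Pt] [SE SP].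
  destruct (Z.eq_dec al be) as [<-|Nab].
  - destruct Pt as [|[_ [<- Hx]]]; [lia|].
    destruct Hx; specialize (SP al x ltac:(crush)); destruct_hyps; subst; crush.
  - pose proof (SE al ltac:(lia)); pose proof (SE (be - 1) ltac:(lia)).
    destruct x, y;
      try pose proof (SP al TDown ltac:(crush)); try pose proof (SP al TUp ltac:(crush));
      try pose proof (SP be TDown ltac:(crush)); try pose proof (SP be TUp ltac:(crush));
      clear SE SP; destruct_hyps; subst; crush.
Qed.

(** * Intersection of typed intervals and the Helly property *)

Scheme Equality for ttype.

Definition cap_type (x y : ttype) : ttype := if ttype_eq_dec x y then x else TEmpty.

Definition tcap (t t' : tint) : tint :=
  TI (match Z.compare (tlp t) (tlp t') with
      | Eq => cap_type (tlt t) (tlt t') | Lt => tlt t' | Gt => tlt t end)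
     (Z.max (tlp t) (tlp t'))
     (match Z.compare (trp t) (trp t') with
      | Eq => cap_type (trt t) (trt t') | Lt => trt t | Gt => trt t' end)
     (Z.min (trp t) (trp t')).

Ltac case_tcap := unfold tcap, cap_type; simpl;
  repeat match goal with
  | |- context [Z.compare ?a ?b] => destruct (Z.compare_spec a b)
  | |- context [ttype_eq_dec ?x ?y] => destruct (ttype_eq_dec x y)
  end.

Lemma tedge_tcap t t' k : tedge (tcap t t') k <-> tedge t k /\ tedge t' k.
Proof. unfold tedge, tcap; simpl; lia. Qed.

Definition after_left (t : tint) (p : Z) (x : ttype) : Prop :=
  tlp t < p \/ (p = tlp t /\ x = tlt t).

Definition before_right (t : tint) (p : Z) (x : ttype) : Prop :=
  p < trp t \/ (p = trp t /\ x = trt t).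

Lemma tpoint_iff t p x : proper t ->
  (tpoint t p x <-> x <> TEmpty /\ after_left t p x /\ before_right t p x).
Proof.
  destruct t as [l al r be]; unfold proper, tint_wf, tpoint, after_left, before_right; simpl.
  intros Pt; split; intros; destruct_hyps; subst; crush.
Qed.

Lemma after_left_tcap t t' p x : x <> TEmpty ->
  (after_left (tcap t t') p x <-> after_left t p x /\ after_left t' p x).
Proof.
  destruct t as [l al r be], t' as [l' al' r' be']; unfold after_left; simpl.
  intros Hx; case_tcap; split; intros; destruct_hyps; subst; crush.
Qed.

Lemma before_right_tcap t t' p x : x <> TEmpty ->
  (before_right (tcap t t') p x <-> before_right t p x /\ before_right t' p x).
Proof.
  destruct t as [l al r be], t' as [l' al' r' be']; unfold before_right; simpl.
  intros Hx; case_tcap; split; intros; destruct_hyps; subst; crush.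
Qed.

Lemma ttype_nonempty x : x <> TEmpty -> x = TUp \/ x = TDown.
Proof. destruct x; auto; congruence. Qed.

Lemma proper_tcap t t' : proper t -> proper t' -> tmeet t t' -> proper (tcap t t').
Proof.
  intros Pt Pt' M. set (c := tcap t t').
  destruct (Z.lt_ge_cases (tlp c) (trp c)) as [Lt|Ge].
  { split; [unfold tint_wf|left]; lia. }
  destruct M as [[k [Ek Ek']]|[p [x [Hp Hp']]]].
  - assert (Ec : tedge c k) by (apply tedge_tcap; auto). unfold tedge in Ec; lia.
  - apply tpoint_iff in Hp as [Hx [L R]]; apply tpoint_iff in Hp' as [_ [L' R']]; auto.
    assert (Lc : after_left c p x) by (apply after_left_tcap; auto).
    assert (Rc : before_right c p x) by (apply before_right_tcap; auto).
    unfold after_left, before_right in Lc, Rc.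
    split; [unfold tint_wf; lia|right].
    destruct Lc as [|[Ep Ex]], Rc as [|[Ep' Ex']]; try lia.
    split; [lia|split; [congruence|]]. rewrite <- Ex; apply ttype_nonempty, Hx.
Qed.

Lemma tpoint_tcap t t' p x : proper t -> proper t' -> tmeet t t' ->
  (tpoint (tcap t t') p x <-> tpoint t p x /\ tpoint t' p x).
Proof.
  intros Pt Pt' M.
  rewrite !tpoint_iff by auto using proper_tcap.
  split; [intros [Hx [L R]]|intros [[Hx [L R]] [_ [L' R']]]].
  - apply after_left_tcap in L; apply before_right_tcap in R; tauto.
  - rewrite after_left_tcap, before_right_tcap; tauto.
Qed.

Lemma tmeet_bound t t' : proper t -> proper t' -> tmeet t t' -> tlp t <= trp t'.
Proof.
  destruct t as [l al r be], t' as [l' al' r' be'].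
  unfold proper, tint_wf, tmeet, tedge, tpoint; simpl; intros Pt Pt' M; destruct_hyps; lia.
Qed.

Lemma tmeet_touch t t' : proper t -> proper t' -> tmeet t t' -> trp t = tlp t' ->
  trt t = tlt t' /\ tlt t' <> TEmpty.
Proof.
  destruct t as [l al r be], t' as [l' al' r' be'].
  unfold proper, tint_wf, tmeet, tedge, tpoint; simpl; intros Pt Pt' M E.
  destruct_hyps; subst; first [lia | split; congruence].
Qed.

Lemma proper_point t : proper t -> tlp t = trp t -> tlt t = trt t /\ tlt t <> TEmpty.
Proof.
  destruct t as [l al r be]; unfold proper; simpl; intros P E.
  destruct_hyps; subst; first [lia | split; congruence].
Qed.

Ltac tmeet_facts P P' M :=
  pose proof (tmeet_bound _ _ P P' M); pose proof (tmeet_bound _ _ P' P (tmeet_sym _ _ M));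
  pose proof (tmeet_touch _ _ P P' M); pose proof (tmeet_touch _ _ P' P (tmeet_sym _ _ M)).

Lemma tmeet_helly t1 t2 t3 : proper t1 -> proper t2 -> proper t3 ->
  tmeet t1 t2 -> tmeet t1 t3 -> tmeet t2 t3 ->
  (exists k, tedge t1 k /\ tedge t2 k /\ tedge t3 k) \/
  (exists p x, tpoint t1 p x /\ tpoint t2 p x /\ tpoint t3 p x).
Proof.
  intros P1 P2 P3 M12 M13 M23.
  destruct (Z.lt_ge_cases (Z.max (tlp t1) (Z.max (tlp t2) (tlp t3)))
                          (Z.min (trp t1) (Z.min (trp t2) (trp t3)))) as [Lt|Ge].
  { left; exists (Z.max (tlp t1) (Z.max (tlp t2) (tlp t3))); unfold tedge; lia. }
  tmeet_facts P1 P2 M12; tmeet_facts P1 P3 M13; tmeet_facts P2 P3 M23.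
  pose proof (proper_point _ P1); pose proof (proper_point _ P2); pose proof (proper_point _ P3).
  pose proof (proj1 P1); pose proof (proj1 P2); pose proof (proj1 P3).
  clear P1 P2 P3 M12 M13 M23.
  destruct t1 as [l1 a1 r1 b1], t2 as [l2 a2 r2 b2], t3 as [l3 a3 r3 b3];
    unfold tint_wf, tpoint in *; simpl in *.
  (* Without a common edge the intervals share only the largest left end,
     where the touching conditions force a common type. *)
  right; exists (Z.max a1 (Z.max a2 a3)).
  repeat match goal with H : (?u = ?v :> Z) -> _ |- _ =>
    let E := fresh "E" in destruct (Z.eq_dec u v) as [E|E]; [specialize (H E)|clear H] end.
  all: destruct_hyps; try lia.
  all: solve [ exists l1; split; [|split]; solve_tpoint
             | exists l2; split; [|split]; solve_tpoint
             | exists l3; split; [|split]; solve_tpoint ].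
Qed.

Lemma tmeet_tcap s t t' : proper s -> proper t -> proper t' ->
  tmeet s t -> tmeet s t' -> tmeet t t' -> tmeet s (tcap t t').
Proof.
  intros Ps Pt Pt' Mt Mt' M.
  destruct (tmeet_helly s t t' Ps Pt Pt' Mt Mt' M) as [[k [Ek [Ek' Ek'']]]|[p [x [Hp [Hp' Hp'']]]]].
  - left; exists k; rewrite tedge_tcap; auto.
  - right; exists p, x; rewrite tpoint_tcap; auto.
Qed.

Lemma tsub_tcap_l t t' : proper t -> proper t' -> tmeet t t' -> tsub (tcap t t') t.
Proof.
  intros Pt Pt' M; split; intros *; [rewrite tedge_tcap|rewrite tpoint_tcap by auto]; tauto.
Qed.

Lemma tsub_tcap_r t t' : proper t -> proper t' -> tmeet t t' -> tsub (tcap t t') t'.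
Proof.
  intros Pt Pt' M; split; intros *; [rewrite tedge_tcap|rewrite tpoint_tcap by auto]; tauto.
Qed.

(* [W] stands for the whole row: it seeds the intersection, so that an empty
   family still yields an interval met by everything that meets [W]. *)
Lemma helly_family {I : Type} (T : I -> tint) (F : I -> Prop) (W : tint) (l : list I) :
  proper W ->
  (forall i, F i -> proper (T i) /\ tmeet W (T i)) ->
  (forall i j, F i -> F j -> tmeet (T i) (T j)) ->
  exists m, proper m /\ (forall i, In i l -> F i -> tsub m (T i)) /\
    (forall s, proper s -> tmeet s W -> (forall i, In i l -> F i -> tmeet s (T i)) ->
       tmeet s m).
Proof.
  intros PW HF HT; induction l as [|i l [m [Pm [Sm Mm]]]].
  { exists W; split; [|split]; [auto | intros ? [] | auto]. }
  destruct (classic (F i)) as [Fi|Fi].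
  - destruct (HF i Fi) as [Pi Wi].
    assert (Mi : tmeet m (T i)).
    { apply tmeet_sym, Mm; auto using tmeet_sym. }
    exists (tcap m (T i)); split; [|split].
    + apply proper_tcap; auto.
    + intros j [<-|Hj] Fj; [apply tsub_tcap_r; auto|].
      eapply tsub_trans; [apply tsub_tcap_l|apply Sm]; auto.
    + intros s Ps Ws Ms; apply tmeet_tcap; auto; [apply Mm|]; simpl in *; auto.
  - exists m; split; [|split]; [auto| |].
    + intros j [<-|Hj] Fj; [contradiction|auto].
    + intros s Ps Ws Ms; apply Mm; simpl in *; auto.
Qed.

Definition monotyped (t : tint) (s : ttype) : Prop :=
  tlp t < trp t /\ (tlt t = TEmpty \/ tlt t = s) /\ (trt t = TEmpty \/ trt t = s).

(* If [A] and [B] touch without meeting, one of them has a free end at the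
   contact point, and the edge next to that free end is forced. *)
Definition gap_edge (A B : tint) : Z :=
  if Z.ltb (trp A) (tlp B) then trp A
  else match trt A with TEmpty => trp A - 1 | _ => tlp B end.

Lemma monotyped_proper t s : monotyped t s -> proper t.
Proof. intros [H _]; split; [unfold tint_wf|left]; lia. Qed.

Lemma tmeet_gap_edge A B W s : s <> TEmpty -> monotyped A s -> monotyped B s ->
  ~ tmeet A B -> trp A <= tlp B -> proper W -> tmeet W A -> tmeet W B ->
  tedge W (gap_edge A B).
Proof.
  intros Hs SA SB N Hle PW MA MB.
  pose proof (monotyped_proper _ _ SA) as PA; pose proof (monotyped_proper _ _ SB) as PB.
  pose proof (tmeet_bound _ _ PW PA MA).
  pose proof (tmeet_bound _ _ PB PW (tmeet_sym _ _ MB)).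
  unfold gap_edge, tedge; destruct (Z.ltb_spec (trp A) (tlp B)); [lia|].
  assert (Touch : trt A = TEmpty \/ tlt B = TEmpty).
  { destruct SA as [_ [_ [A3|A3]]]; [now left|]. destruct SB as [_ [[B2|B2] _]]; [now right|].
    exfalso; apply N; right; exists (trp A), s; unfold tpoint; split; solve_tpoint. }
  assert (WA : trt A = TEmpty -> tlp W <> trp A).
  { intros EA E; symmetry in E.
    apply (tmeet_touch _ _ PA PW (tmeet_sym _ _ MA)) in E; destruct E; congruence. }
  assert (WB : tlt B = TEmpty -> trp W <> tlp B).
  { intros EB E; apply (tmeet_touch _ _ PW PB MB) in E; destruct E; congruence. }
  destruct (trt A) eqn:EA;
    [specialize (WA eq_refl) | destruct Touch as [T|T]; [discriminate|specialize (WB T)] ..];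
    lia.
Qed.

Lemma tmeet_across_gap A B W W' s : s <> TEmpty -> monotyped A s -> monotyped B s ->
  ~ tmeet A B -> proper W -> proper W' ->
  tmeet W A -> tmeet W B -> tmeet W' A -> tmeet W' B -> tmeet W W'.
Proof.
  intros Hs SA SB N PW PW' MA MB MA' MB'.
  destruct (Z.le_gt_cases (trp A) (tlp B)) as [AB|BA].
  { left; exists (gap_edge A B); split; eapply tmeet_gap_edge; eauto. }
  destruct (Z.le_gt_cases (trp B) (tlp A)) as [BA'|AB'].
  { assert (N' : ~ tmeet B A) by (intro M; apply N, tmeet_sym, M).
    left; exists (gap_edge B A); split; eapply tmeet_gap_edge; eauto. }
  exfalso; apply N; left; exists (Z.max (tlp A) (tlp B)).
  destruct SA as [SA _], SB as [SB _]; unfold tedge; lia.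
Qed.

(** * t-projections of Z-vertices *)

Definition free_end (p : zpath) (r : Z) : Z := if Z.eqb r (zr1 p) then zx1 p else zx2 p.

Definition other_row (p : zpath) (r : Z) : Z := if Z.eqb r (zr1 p) then zr2 p else zr1 p.

Lemma in_index_dec p r : {in_index p r} + {~ in_index p r}.
Proof.
  unfold in_index; destruct (Z.eq_dec r (zr1 p)), (Z.eq_dec r (zr2 p)); [left..|right]; tauto.
Qed.

Lemma tproj_seg_tint p r : in_index p r ->
  tproj p r = seg_tint (free_end p r) (zc p) r (other_row p r).
Proof.
  unfold in_index, tproj, free_end, other_row; intros H.
  destruct (Z.eqb_spec r (zr1 p)); [subst; reflexivity|].
  destruct H; [contradiction|subst; reflexivity].
Qed.

Lemma free_end_neq p r : is_zvertex p -> free_end p r <> zc p.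
Proof. unfold is_zvertex, free_end; intros [_ [H1 H2]]; destruct (Z.eqb r (zr1 p)); auto. Qed.

Lemma bend_type_nonempty a a' : bend_type a a' <> TEmpty.
Proof. unfold bend_type; destruct (Z.ltb a' a); discriminate. Qed.

Lemma seg_tint_monotyped x c a a' : x <> c -> monotyped (seg_tint x c a a') (bend_type a a').
Proof.
  unfold monotyped, seg_tint; intros H; destruct (Z.leb_spec x c); simpl; repeat split; auto; lia.
Qed.

Lemma tedge_seg_tint x c a a' k : seg_has x c k -> tedge (seg_tint x c a a') k.
Proof. unfold seg_has, tedge, seg_tint; destruct (Z.leb_spec x c); simpl; lia. Qed.

Lemma tpoint_seg_tint_bend x c a a' : x <> c -> tpoint (seg_tint x c a a') c (bend_type a a').
Proof.
  unfold tpoint, seg_tint; intros H; split; [apply bend_type_nonempty|].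
  destruct (Z.leb_spec x c); simpl; [right; right|right; left]; auto.
Qed.

Lemma tproj_monotyped p r : is_zvertex p -> in_index p r ->
  monotyped (tproj p r) (bend_type r (other_row p r)).
Proof.
  intros Hp Hr; rewrite tproj_seg_tint by auto; apply seg_tint_monotyped, free_end_neq, Hp.
Qed.

Lemma tproj_proper p r : is_zvertex p -> in_index p r -> proper (tproj p r).
Proof. intros; eapply monotyped_proper, tproj_monotyped; eauto. Qed.

Lemma tintersects_refl p r : is_zvertex p -> in_index p r ->
  tintersects (tproj p r) (tproj p r).
Proof.
  intros Hp Hr; apply tmeet_tintersects; left; exists (tlp (tproj p r)).
  destruct (tproj_monotyped p r Hp Hr) as [H _]; unfold tedge; lia.
Qed.

Lemma in_index_HE p y x : path_has_edge p (HE y x) -> in_index p y.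
Proof. unfold in_index; simpl; intros [[? _]|[? _]]; auto. Qed.

Lemma seg_has_free_end p r x : is_zvertex p -> path_has_edge p (HE r x) ->
  seg_has (free_end p r) (zc p) x.
Proof.
  unfold is_zvertex, free_end; simpl; intros [Z1 _] [[E S]|[E S]];
  destruct (Z.eqb_spec r (zr1 p)); auto; lia.
Qed.

Lemma VE_column_side p r x y : is_zvertex p -> in_index p r -> path_has_edge p (VE x y) ->
  x = zc p /\ (other_row p r < r <-> y < r).
Proof.
  unfold is_zvertex, in_index, other_row; simpl.
  intros [Z1 _] H [E S]; unfold seg_has in S; split; auto.
  destruct (Z.eqb_spec r (zr1 p)); split; intro; lia.
Qed.

Lemma tmeet_VE p q r x y : is_zvertex p -> is_zvertex q -> in_index p r -> in_index q r ->
  path_has_edge p (VE x y) -> path_has_edge q (VE x y) -> tmeet (tproj p r) (tproj q r).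
Proof.
  intros Zp Zq Hp Hq Ep Eq.
  destruct (VE_column_side p r x y Zp Hp Ep) as [Cp Sp].
  destruct (VE_column_side q r x y Zq Hq Eq) as [Cq Sq].
  assert (B : bend_type r (other_row p r) = bend_type r (other_row q r)).
  { unfold bend_type.
    destruct (Z.ltb_spec (other_row p r) r), (Z.ltb_spec (other_row q r) r); auto; lia. }
  rewrite (tproj_seg_tint p r Hp), (tproj_seg_tint q r Hq).
  right; exists x, (bend_type r (other_row p r)); split.
  - rewrite Cp; apply tpoint_seg_tint_bend, free_end_neq, Zp.
  - rewrite B, Cq; apply tpoint_seg_tint_bend, free_end_neq, Zq.
Qed.

Lemma tmeet_or_share_row p q r e : is_zvertex p -> is_zvertex q ->
  in_index p r -> in_index q r -> path_has_edge p e -> path_has_edge q e ->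
  tmeet (tproj p r) (tproj q r) \/ (exists y, y <> r /\ in_index p y /\ in_index q y).
Proof.
  intros Zp Zq Hp Hq Ep Eq; destruct e as [y x | x y].
  - destruct (Z.eq_dec y r) as [->|Ny].
    + left; left; exists x; rewrite (tproj_seg_tint p r Hp), (tproj_seg_tint q r Hq).
      split; apply tedge_seg_tint, seg_has_free_end; auto.
    + right; exists y; split; [auto|split; eapply in_index_HE; eauto].
  - left; eapply tmeet_VE; eauto.
Qed.

Definition index2 (p : zpath) (r s : Z) : Prop :=
  (zr1 p = r /\ zr2 p = s) \/ (zr1 p = s /\ zr2 p = r).

Lemma index2_l p r s : index2 p r s -> in_index p r.
Proof. unfold index2, in_index; intros [[]|[]]; auto. Qed.

Lemma index2_r p r s : index2 p r s -> in_index p s.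
Proof. unfold index2, in_index; intros [[]|[]]; auto. Qed.

Lemma index2_only p r s y : index2 p r s -> in_index p y -> y = r \/ y = s.
Proof. unfold index2, in_index; intros [[]|[]] [|]; subst; auto. Qed.

Lemma index2_neq p r s : is_zvertex p -> index2 p r s -> r <> s.
Proof. unfold index2, is_zvertex; intros [Z1 _] [[]|[]]; subst; auto. Qed.

Lemma other_row_index2 p r s : is_zvertex p -> index2 p r s -> other_row p r = s.
Proof.
  intros Zp I; pose proof (index2_neq _ _ _ Zp I).
  unfold index2, other_row in *; destruct (Z.eqb_spec r (zr1 p)); lia.
Qed.

Lemma index2_intro p r s : in_index p r -> in_index p s -> r <> s -> index2 p r s.
Proof. unfold index2, in_index; intros [|] [|] N; subst; auto; lia. Qed.

Lemma in_index_three p a b c : in_index p a -> in_index p b -> in_index p c ->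
  a <> b -> b <> c -> a <> c -> False.
Proof. unfold in_index; lia. Qed.

Definition wide (B : Z) : tint := TI TEmpty (- B) TEmpty B.

Definition coord_size (p : zpath) : Z := Z.abs (zx1 p) + Z.abs (zx2 p) + Z.abs (zc p).

Lemma list_bounded {A : Type} (f : A -> Z) (l : list A) :
  exists B, 0 < B /\ forall x, In x l -> f x < B.
Proof.
  induction l as [|a l [B [HB Hl]]]; [exists 1; split; [lia|intros ? []]|].
  exists (Z.max B (f a + 1)); split; [lia|].
  intros x [<-|Hx]; [|specialize (Hl x Hx)]; lia.
Qed.

Lemma tmeet_wide p r B : is_zvertex p -> in_index p r -> coord_size p < B ->
  tmeet (wide B) (tproj p r).
Proof.
  intros Zp Hr HB; left; exists (Z.min (free_end p r) (zc p)).
  rewrite tproj_seg_tint by auto.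
  assert (Z.abs (free_end p r) <= Z.abs (zx1 p) + Z.abs (zx2 p))
    by (unfold free_end; destruct (r =? zr1 p); lia).
  pose proof (free_end_neq p r Zp).
  unfold coord_size, wide, tedge, seg_tint in *.
  destruct (Z.leb_spec (free_end p r) (zc p)); simpl; lia.
Qed.

(** * Cliques of Z-vertices *)

Section Clique.

Variables (V : Type) (P : V -> zpath).
Hypothesis Vfin : exists l : list V, forall v, In v l.
Hypothesis HZ : forall v, is_zvertex (P v).
Variable X : V -> Prop.
Hypothesis HX : is_clique P X.

Definition disjoint_pair (r s : Z) : Prop :=
  exists p q, X p /\ X q /\ index2 (P p) r s /\ index2 (P q) r s /\
    ~ tintersects (tproj (P p) r) (tproj (P q) r).

Definition covers_rows (r s : Z) : Prop :=
  forall w, X w -> in_index (P w) r \/ in_index (P w) s.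

Definition only_row (r s : Z) (w : V) : Prop :=
  X w /\ in_index (P w) r /\ ~ in_index (P w) s.

Definition pairwise_on (r s : Z) : Prop :=
  forall w w', only_row r s w -> only_row r s w' ->
    tintersects (tproj (P w) r) (tproj (P w') r).

Lemma clique_tmeet_or_share_row u v r : X u -> X v -> u <> v ->
  in_index (P u) r -> in_index (P v) r ->
  tmeet (tproj (P u) r) (tproj (P v) r) \/
  (exists y, y <> r /\ in_index (P u) y /\ in_index (P v) y).
Proof.
  intros Xu Xv N Hu Hv; destruct (HX u v Xu Xv N) as [_ [e [Eu Ev]]].
  eapply tmeet_or_share_row; eauto.
Qed.

Lemma tmeet_only_row_index2 w p r s : only_row r s w -> X p -> index2 (P p) r s ->
  tmeet (tproj (P w) r) (tproj (P p) r).
Proof.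
  intros [Xw [Hr Hs]] Xp Ip.
  assert (N : w <> p) by (intro; subst; apply Hs; eapply index2_r; eauto).
  destruct (clique_tmeet_or_share_row w p r Xw Xp N Hr (index2_l _ _ _ Ip))
    as [M|[y [Ny [Hy1 Hy2]]]]; auto.
  destruct (index2_only _ _ _ _ Ip Hy2); subst; tauto.
Qed.

(* A vertex avoiding rows r and s can share only vertical edges with p and q,
   so p and q bend on the same column, where their projections on r meet. *)
Lemma disjoint_pair_covers r s : disjoint_pair r s -> covers_rows r s.
Proof.
  intros [p [q [Xp [Xq [Ip [Iq N]]]]]] w Xw.
  destruct (in_index_dec (P w) r) as [|Nr]; [now left|].
  destruct (in_index_dec (P w) s) as [|Ns]; [now right|].
  exfalso; apply N, tmeet_tintersects.
  assert (Column : forall z, X z -> index2 (P z) r s ->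
            path_has_edge (P z) (VE (zc (P w)) (Z.min r s))).
  { intros z Xz Iz.
    assert (Nwz : w <> z) by (intro; subst; apply Nr; eapply index2_l; eauto).
    destruct (HX w z Xw Xz Nwz) as [_ [[y x|x y] [Ew Ez]]].
    - exfalso; destruct (index2_only _ _ _ y Iz (in_index_HE _ _ _ Ez)); subst;
        [apply Nr|apply Ns]; eapply in_index_HE; eauto.
    - destruct Ew as [-> _], Ez as [-> _]; split; [reflexivity|].
      pose proof (index2_neq _ _ _ (HZ z) Iz).
      unfold seg_has; destruct Iz as [[-> ->]|[-> ->]]; lia. }
  eapply tmeet_VE; eauto using index2_l.
Qed.

Lemma disjoint_pair_pairwise r s : disjoint_pair r s -> pairwise_on r s.
Proof.
  intros [p [q [Xp [Xq [Ip [Iq N]]]]]] w w' Hw Hw'.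
  pose proof (proj1 (proj2 Hw)); pose proof (proj1 (proj2 Hw')).
  apply tmeet_tintersects.
  apply (tmeet_across_gap (tproj (P p) r) (tproj (P q) r) _ _ (bend_type r s));
    try solve [eauto using tproj_proper, tmeet_only_row_index2].
  - apply bend_type_nonempty.
  - rewrite <- (other_row_index2 _ _ _ (HZ p) Ip); eauto using tproj_monotyped, index2_l.
  - rewrite <- (other_row_index2 _ _ _ (HZ q) Iq); eauto using tproj_monotyped, index2_l.
  - intro M; apply N, tmeet_tintersects, M.
Qed.

Lemma disjoint_pair_of_not_pairwise r s : ~ pairwise_on r s ->
  exists y, y <> r /\ y <> s /\ disjoint_pair r y.
Proof.
  intros N; apply NNPP; intro NE; apply N; intros w w' [Xw [Hr Hs]] [Xw' [Hr' Hs']].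
  apply NNPP; intro NI.
  assert (Nw : w <> w') by (intro; subst; apply NI, tintersects_refl; auto).
  destruct (clique_tmeet_or_share_row w w' r Xw Xw' Nw Hr Hr') as [M|[y [Ny [Hy Hy']]]].
  - apply NI, tmeet_tintersects, M.
  - apply NE; exists y; split; [auto|split; [intros ->; tauto|]].
    exists w, w'; repeat split; auto using index2_intro.
Qed.

Lemma disjoint_pair_of_not_clique r s :
  ~ proj_graph_clique P (X_ab P X r s) r -> disjoint_pair r s.
Proof.
  intros N; apply NNPP; intro ND; apply N; intros u v [Xu Iu] [Xv Iv] _.
  apply NNPP; intro NI; apply ND; exists u, v; repeat split; auto.
Qed.

Lemma helly_only_row r s : pairwise_on r s ->
  exists m, proper m /\
    (forall w, only_row r s w -> v_contains (P w) r m) /\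
    (forall w, X w -> index2 (P w) r s -> v_intersects (P w) r m).
Proof.
  intros Hrs; destruct Vfin as [l Hl].
  destruct (list_bounded (fun w => coord_size (P w)) l) as [B [HB0 HB]].
  assert (PB : proper (wide B)) by (split; [unfold tint_wf|left]; simpl; lia).
  destruct (helly_family (fun w => tproj (P w) r) (only_row r s) (wide B) l PB)
    as [m [Pm [Sm Mm]]].
  - intros w [_ [Hr _]]; split; [apply tproj_proper | apply tmeet_wide]; auto.
  - intros w w' Hw Hw'; apply tintersects_tmeet; [| |apply Hrs; auto];
      apply tproj_proper; [|apply Hw| |apply Hw']; auto.
  - exists m; split; [auto|split].
    + intros w Hw; split; [apply Hw|].
      apply tsub_tcontains; [apply tproj_proper; [|apply Hw]| |apply Sm]; auto.
    + intros w Xw Iw; pose proof (index2_l _ _ _ Iw).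
      split; [auto|]; apply tmeet_tintersects, Mm; auto using tproj_proper.
      * apply tmeet_sym, tmeet_wide; auto.
      * intros w' _ Hw'; apply tmeet_sym, (tmeet_only_row_index2 _ _ r s); auto.
Qed.

Lemma good_I_of_pairwise r s : r <> s -> covers_rows r s ->
  pairwise_on r s -> pairwise_on s r -> in_good_graph P X.
Proof.
  intros Nrs C Prs Psr.
  destruct (helly_only_row r s Prs) as [mr [Pmr [Cr Ir]]].
  destruct (helly_only_row s r Psr) as [ms [Pms [Cs Is]]].
  left; exists r, s, mr, ms; split; [auto|split; [auto|]].
  intros w Xw; unfold good_I.
  destruct (in_index_dec (P w) r) as [Hr|Hr], (in_index_dec (P w) s) as [Hs|Hs].
  - right; right; split; [apply Ir|apply Is]; auto using index2_intro.
  - left; apply Cr; repeat split; auto.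
  - right; left; apply Cs; repeat split; auto.
  - destruct (C w Xw); contradiction.
Qed.

Lemma good_II_of_pairwise a b c : a <> b -> b <> c -> a <> c -> covers_rows a b ->
  pairwise_on a b -> pairwise_on b c -> pairwise_on c a -> in_good_graph P X.
Proof.
  intros Nab Nbc Nac C Pab Pbc Pca.
  destruct (helly_only_row a b Pab) as [ma [Pma [Ca _]]].
  destruct (helly_only_row b c Pbc) as [mb [Pmb [Cb Ib]]].
  destruct (helly_only_row c a Pca) as [mc [Pmc [Cc _]]].
  right; exists a, b, c, ma, mb, mc; split; [auto|split; [auto|split; [auto|]]].
  intros w Xw; unfold good_II.
  destruct (in_index_dec (P w) b) as [Hb|Hb], (in_index_dec (P w) c) as [Hc|Hc].
  - assert (~ in_index (P w) a) by (intro Ha; exact (in_index_three (P w) a b c Ha Hb Hc Nab Nbc Nac)).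
    right; right; split; [apply Ib|apply Cc]; repeat split; auto using index2_intro.
  - right; left; apply Cb; repeat split; auto.
  - left; apply Ca; repeat split; auto; destruct (C w Xw); tauto.
  - left; apply Ca; repeat split; auto; destruct (C w Xw); tauto.
Qed.

Lemma good_graph_of_disjoint_pair a b : disjoint_pair a b -> in_good_graph P X.
Proof.
  intros Sab.
  assert (Nab : a <> b) by (destruct Sab as [p [_ [_ [_ [Ip _]]]]]; eapply index2_neq; eauto).
  pose proof (disjoint_pair_covers a b Sab) as Cab.
  destruct (classic (pairwise_on b a)) as [Pba|Pba].
  { apply (good_I_of_pairwise a b); auto using disjoint_pair_pairwise. }
  destruct (disjoint_pair_of_not_pairwise b a Pba) as [c [Ncb [Nca Sbc]]].
  destruct (classic (pairwise_on c b)) as [Pcb|Pcb].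
  { apply (good_I_of_pairwise b c); auto using disjoint_pair_covers, disjoint_pair_pairwise. }
  destruct (disjoint_pair_of_not_pairwise c b Pcb) as [d [Ndc [Ndb Scd]]].
  assert (d = a) as ->.
  { destruct Scd as [p [_ [Xp [_ [Ip _]]]]].
    destruct (Cab p Xp) as [H|H]; destruct (index2_only _ _ _ _ Ip H); congruence. }
  apply (good_II_of_pairwise a b c); auto using disjoint_pair_pairwise.
Qed.

End Clique.

Theorem lemma9 (V : Type) (P : V -> zpath)
  (Vfin : exists l : list V, forall v, In v l)
  (HZ : forall v, is_zvertex (P v))
  (X : V -> Prop) (HX : is_clique P X)
  (a b : Z) (Hab : ~ proj_graph_clique P (X_ab P X a b) a) :
  in_good_graph P X.
Proof.
  apply (good_graph_of_disjoint_pair V P Vfin HZ X HX a b).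
  apply disjoint_pair_of_not_clique, Hab.
Qed.
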